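(* Let $V$ be a nonlocal vertex algebra. Assume there exists a lower-truncated, exhaustive increasing filtration $F=\{F_n\}_{n\in\mathbb{Z}}$ of $V$ with $\mathbf{1}\in F_0$ satisfying either (i) $a_kF_n\subset F_{m+n}$ for all $a\in F_m$, $m,n,k\in\mathbb{Z}$, or (ii) $a_mF_n\subset F_{k+n-m-1}$ for all $a\in F_k$, $k,m,n\in\mathbb{Z}$, such that the left adjoint module for $\mathrm{Gr}_F(V)$ is graded-irreducible. Then the left adjoint module for $V$ is irreducible.
   Context: A nonlocal vertex algebra is a complex vector space $V$ with vector $\mathbf{1}$ and linear $Y:V\to\mathrm{Hom}(V,V((x)))$, $Y(v,x)=\sum_nv_nx^{-n-1}$, with $Y(\mathbf{1},x)v=v$, $Y(v,x)\mathbf{1}\in V[[x]]$ with constant term $v$, and weak associativity $(x_0+x_2)^lY(u,x_0+x_2)Y(v,x_2)w=(x_0+x_2)^lY(Y(u,x_0)v,x_2)w$ for some $l\ge0$. The left adjoint module is $V$ acting on itself by $Y$; it is irreducible if its only submodules are $0$ and $V$. A filtration $F_n\subset F_{n+1}$ is lower-truncated if $F_n=0$ for $n$ sufficiently small, and exhaustive if $\bigcup_nF_n=V$. $\mathrm{Gr}_F(V)=\coprod_nF_n/F_{n-1}$ is a nonlocal vertex algebra with vacuum $\mathbf{1}+F_{-1}$ and products $(a+F_{m-1})_k(b+F_{n-1})=a_kb+F_{m+n-1}$ in case (i), resp. $a_kb+F_{m+n-k-2}$ in case (ii), for $a\in F_m$, $b\in F_n$; it is graded by the index $n$ (case (i)),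 resp. by $n$ as a $\mathbb{Z}$-graded algebra (case (ii)). Graded-irreducible means the only graded submodules of the adjoint module are $0$ and the whole space. *)

From HB Require Import structures.
From mathcomp Require Import all_boot all_order all_algebra.
From mathcomp Require Import reals complex.
Set Implicit Arguments.
Unset Strict Implicit.
Unset Printing Implicit Defensive.
Import Order.TTheory GRing.Theory Num.Theory.
Local Open Scope ring_scope.

(* The complex numbers are  R[i]  for  R : realType.
   A vertex operator  Y(u,x) = sum_n u_n x^{-n-1}  is encoded by the map
   Y : int -> V -> V -> V,  Y n u v = u_n v. *)

Section NVA.
Variable R : realType.
Variable V : lmodType R[i].

Definition gbin (k : int) (j : nat) : R[i] :=
  (\prod_(i < j) (k - (i : nat)%:Z))%:~R / (j`!)%:R.

(* Y : V -> Hom(V, V((x))) is linear, and Y(u,x)v has only finitely many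
   negative powers of x, i.e. u_n v = 0 for n large. *)
Definition Y_linear (Y : int -> V -> V -> V) : Prop :=
  (forall n (a : R[i]) u u' v, Y n (a *: u + u') v = a *: Y n u v + Y n u' v) /\
  (forall n (a : R[i]) u v v', Y n u (a *: v + v') = a *: Y n u v + Y n u v').

Definition Y_truncated (Y : int -> V -> V -> V) : Prop :=
  forall u v, exists N : int, forall n : int, N <= n -> Y n u v = 0.

Definition vacuum_property (vac : V) (Y : int -> V -> V -> V) : Prop :=
  forall (n : int) v, Y n vac v = (if n == -1 then v else 0).

Definition creation_property (vac : V) (Y : int -> V -> V -> V) : Prop :=
  (forall (n : int) u, 0 <= n -> Y n u vac = 0) /\ (forall u, Y (-1) u vac = u).

(* Weak associativity, written coefficientwise: the coefficient of
   x0^{-p-1} x2^{-q-1} of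
     (x0+x2)^l Y(u,x0+x2)Y(v,x2)w    (binomial expansion in nonnegative
                                      powers of x2)
   is  sum_{j>=0} binom(j-p-1, j) u_{l+p-j} v_{q+j} w  (a finite sum since
   v_{q+j} w = 0 for j >= N), and that of (x0+x2)^l Y(Y(u,x0)v,x2)w is
   sum_{i=0}^{l} binom(l,i) (u_{p+l-i} v)_{q+i} w. *)
Definition weak_associativity (Y : int -> V -> V -> V) : Prop :=
  forall u v w, exists l : nat, forall (p q : int) (N : nat),
    (forall j : nat, (N <= j)%N -> Y (q + j%:Z) v w = 0) ->
    \sum_(j < N) gbin ((j : nat)%:Z - p - 1) j
                   *: Y (l%:Z + p - (j : nat)%:Z) u (Y (q + (j : nat)%:Z) v w)
    = \sum_(i < l.+1) ('C(l, i))%:R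
                   *: Y (q + (i : nat)%:Z) (Y (p + l%:Z - (i : nat)%:Z) u v) w.

Definition nonlocal_vertex_algebra (vac : V) (Y : int -> V -> V -> V) : Prop :=
  [/\ Y_linear Y, Y_truncated Y, vacuum_property vac Y,
      creation_property vac Y & weak_associativity Y].

Definition is_subspace (W : V -> Prop) : Prop :=
  W 0 /\ forall (a : R[i]) x y, W x -> W y -> W (a *: x + y).

Definition adjoint_submodule (Y : int -> V -> V -> V) (W : V -> Prop) : Prop :=
  is_subspace W /\ forall (n : int) u w, W w -> W (Y n u w).

Definition adjoint_irreducible (Y : int -> V -> V -> V) : Prop :=
  forall W, adjoint_submodule Y W -> (forall v, W v -> v = 0) \/ (forall v, W v).

Definition good_filtration (vac : V) (F : int -> V -> Prop) : Prop :=
  [/\ forall n, is_subspace (F n),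
      forall (n : int) v, F n v -> F (n + 1) v,
      exists n0 : int, forall n v, n <= n0 -> F n v -> v = 0,
      forall v, exists n, F n v
    & F 0 vac].

Definition filtration_cond_i (Y : int -> V -> V -> V) (F : int -> V -> Prop) :=
  forall (m n k : int) a b, F m a -> F n b -> F (m + n) (Y k a b).

Definition filtration_cond_ii (Y : int -> V -> V -> V) (F : int -> V -> Prop) :=
  forall (k m n : int) a b, F k a -> F n b -> F (k + n - m - 1) (Y m a b).

(* Degree in Gr_F(V) of (a+F_{m-1})_k (b+F_{n-1}), a in F_m, b in F_n. *)
Definition gr_deg_i (m n k : int) : int := m + n.
Definition gr_deg_ii (m n k : int) : int := m + n - k - 1.

(* A graded subspace  S = (+)_n S_n  of Gr_F(V) = (+)_n F_n/F_{n-1} is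
   represented by the preimages U n in F_n of its homogeneous components
   S_n in F_n/F_{n-1}  (so F_{n-1} <= U n <= F_n, U n a subspace).
   It is a submodule of the left adjoint module of Gr_F(V) iff the products
   (a+F_{m-1})_k (b+F_{n-1}) = a_k b + F_{d-1}, d = deg m n k, of
   homogeneous elements with b+F_{n-1} in S_n lie in S_d. *)
Definition gr_graded_submodule (Y : int -> V -> V -> V) (F : int -> V -> Prop)
    (deg : int -> int -> int -> int) (U : int -> V -> Prop) : Prop :=
  [/\ forall n, is_subspace (U n),
      forall n v, F (n - 1) v -> U n v,
      forall n v, U n v -> F n v
    & forall (m n k : int) a b, F m a -> U n b -> U (deg m n k) (Y k a b)].

(* graded-irreducible: the only graded submodules are 0 (all S_n = 0, i.e.
   U n = F_{n-1}) and the whole space (all S_n = F_n/F_{n-1}, i.e. U n = F_n) *)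
Definition gr_graded_irreducible (Y : int -> V -> V -> V) (F : int -> V -> Prop)
    (deg : int -> int -> int -> int) : Prop :=
  forall U, gr_graded_submodule Y F deg U ->
    (forall n v, U n v -> F (n - 1) v) \/ (forall n v, F n v -> U n v).

End NVA.

(** Given a submodule [W] of the adjoint module, the subspaces
    [U n = F (n - 1) + (W ∩ F n)] form a graded submodule of [Gr_F(V)], namely
    the associated graded of [W] for the induced filtration.  Graded
    irreducibility leaves two cases.  If [U n = F (n - 1)] for all [n], then
    [W ∩ F n ⊆ F (n - 1)], so by induction from the level where [F] vanishes
    [W ∩ F n = 0] for all [n], and [W = 0] by exhaustiveness.  If [U n = F n]
    for all [n], then [F n ⊆ F (n - 1) + W], and the same induction gives
    [F n ⊆ W] for all [n], whence [W = V]. *)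

From HB Require Import structures.
From mathcomp Require Import all_boot all_order all_algebra.
From mathcomp Require Import reals complex.
From mathcomp Require Import zify.
Local Open Scope ring_scope.
Import GRing.Theory Num.Theory.

Lemma int_ind_from (P : int -> Prop) (n0 : int) :
  (forall n, n <= n0 -> P n) -> (forall n, P (n - 1) -> P n) -> forall n, P n.
Proof.
move=> Pbase Pstep n.
have [d le_n] : exists d : nat, n <= n0 + d%:Z.
  by exists `|n - n0|%N; rewrite abszE -lerBlDl; exact: ler_norm.
elim: d n le_n => [|d IHd] n le_n; first by apply: Pbase; lia.
by apply: Pstep; apply: IHd; lia.
Qed.

Section AdjointFromGraded.
Variable R : realType.
Variable V : lmodType R[i].
Variable Y : int -> V -> V -> V.
Variable F : int -> V -> Prop.

Hypothesis F_subspace : forall n, is_subspace (F n).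
Hypothesis F_mono : forall (n : int) v, F n v -> F (n + 1) v.
Hypothesis Y_additive : forall n u v v', Y n u (v + v') = Y n u v + Y n u v'.

Lemma subspace0 (P : V -> Prop) : is_subspace P -> P 0.
Proof. by case. Qed.

Lemma subspaceD (P : V -> Prop) : is_subspace P -> forall x y, P x -> P y -> P (x + y).
Proof. by move=> [_ PZ] x y Px Py; have := PZ 1 x y Px Py; rewrite scale1r. Qed.

Lemma F_pred n v : F (n - 1) v -> F n v.
Proof. by move/F_mono; rewrite subrK. Qed.

Definition gr_preimage (W : V -> Prop) (n : int) (v : V) : Prop :=
  exists f w, [/\ F (n - 1) f, W w, F n w & v = f + w].

Lemma gr_preimage_subspace W n : is_subspace W -> is_subspace (gr_preimage W n).
Proof.
move=> W_subspace; split.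
  by exists 0, 0; rewrite addr0; split=> //; apply: subspace0.
move=> a _ _ [f1 [w1 [Ff1 Ww1 Fw1 ->]]] [f2 [w2 [Ff2 Ww2 Fw2 ->]]].
exists (a *: f1 + f2), (a *: w1 + w2); rewrite scalerDr addrACA.
by split=> //; [case: (F_subspace (n - 1)) | case: W_subspace | case: (F_subspace n)];
  move=> _; apply.
Qed.

Lemma gr_preimage_graded_submodule (deg : int -> int -> int -> int) W :
  (forall m n k, deg m (n - 1) k = deg m n k - 1) ->
  (forall m n k a b, F m a -> F n b -> F (deg m n k) (Y k a b)) ->
  adjoint_submodule Y W -> gr_graded_submodule Y F deg (gr_preimage W).
Proof.
move=> deg_pred Y_filt [W_subspace W_Y]; split.
- by move=> n; apply: gr_preimage_subspace.
- by move=> n v Fv; exists v, 0; rewrite addr0; split=> //; apply: subspace0.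
- by move=> n _ [f [w [Ff _ Fw ->]]]; apply: subspaceD => //; apply: F_pred.
move=> m n k a _ Fa [f [w [Ff Ww Fw ->]]].
exists (Y k a f), (Y k a w); split; [|exact: W_Y|exact: Y_filt|exact: Y_additive].
by rewrite -deg_pred; apply: Y_filt.
Qed.

Variable n0 : int.
Hypothesis F_low : forall n v, n <= n0 -> F n v -> v = 0.
Hypothesis F_exhaustive : forall v, exists n, F n v.

Lemma gr_preimage_zero W :
  (forall n v, gr_preimage W n v -> F (n - 1) v) -> forall v, W v -> v = 0.
Proof.
move=> U_zero v Wv; have [n] := F_exhaustive v; move: n v Wv.
apply: (@int_ind_from _ n0) => [n le_n v _ |n IHn v Wv Fv]; first exact: F_low.
apply: IHn => //; apply: U_zero.
by exists 0, v; rewrite add0r; split=> //; apply: subspace0.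
Qed.

Lemma gr_preimage_full W :
  is_subspace W -> (forall n v, F n v -> gr_preimage W n v) -> forall v, W v.
Proof.
move=> W_subspace U_full v; have [n] := F_exhaustive v; move: n v.
apply: (@int_ind_from _ n0) => [n le_n v Fv|n IHn _ /U_full[f [w [Ff Ww _ ->]]]].
  by rewrite (F_low _ _ le_n Fv); apply: subspace0.
by apply: subspaceD => //; apply: IHn.
Qed.

Lemma adjoint_irreducible_of_gr (deg : int -> int -> int -> int) :
  (forall m n k, deg m (n - 1) k = deg m n k - 1) ->
  (forall m n k a b, F m a -> F n b -> F (deg m n k) (Y k a b)) ->
  gr_graded_irreducible Y F deg -> adjoint_irreducible Y.
Proof.
move=> deg_pred Y_filt gr_irr W W_sub.
have [U_zero|U_full] := gr_irr _ (gr_preimage_graded_submodule _ _ deg_pred Y_filt W_sub).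
  by left; apply: gr_preimage_zero.
by right; apply: gr_preimage_full => //; case: W_sub.
Qed.

End AdjointFromGraded.

Theorem proposition2p11 (R : realType) (V : lmodType R[i]) (vac : V)
    (Y : int -> V -> V -> V) (F : int -> V -> Prop) :
  nonlocal_vertex_algebra vac Y ->
  good_filtration vac F ->
  ((filtration_cond_i Y F /\ gr_graded_irreducible Y F gr_deg_i) \/
   (filtration_cond_ii Y F /\ gr_graded_irreducible Y F gr_deg_ii)) ->
  adjoint_irreducible Y.
Proof.
move=> [[_ Y_lin] _ _ _ _] [F_subspace F_mono [n0 F_low] F_exh _].
have Y_additive n u v v' : Y n u (v + v') = Y n u v + Y n u v'.
  by have := Y_lin n 1 u v v'; rewrite !scale1r.
have irr_of_gr := @adjoint_irreducible_of_gr _ _ _ _ F_subspace F_mono Y_additive _ F_low F_exh.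
case=> [[filt_i gr_irr] | [filt_ii gr_irr]].
- apply: (irr_of_gr gr_deg_i) gr_irr => [m n k|]; first by rewrite /gr_deg_i addrA.
  exact: filt_i.
- apply: (irr_of_gr gr_deg_ii) gr_irr => [m n k|]; first by rewrite /gr_deg_ii; lia.
  by move=> m n k a b; apply: filt_ii.
Qed.
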